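(* For all positive integers $N_1,N_2,q,r$ with $q> r\geq 1$, we have $f_{q,r}(N_1)f_{q,r}(N_2)\geq f_{q,r}(N_1N_2)$.
   Context: For a $q$-edge-colored complete graph $K$ on vertex set $[N]$ with its natural order, $f_{q,r}(K)$ is the maximum number of vertices of a monotone path (vertices strictly increasing in traversal order) in $K$ whose edges use at most $r$ colors; $f_{q,r}(N)$ is the minimum of $f_{q,r}(K)$ over all such $q$-edge-colored $K$ on $N$ vertices. *)

From mathcomp Require Import all_boot.
Set Implicit Arguments. Unset Strict Implicit. Unset Printing Implicit Defensive.

(* A q-edge-coloring of the complete graph on vertex set 'I_N (= [N] with its
   natural order).  The color of the edge {x,y} with x < y is c (x, y); values
   c (x, y) with x >= y are irrelevant (never used). *)
Definition coloring (N q : nat) := {ffun 'I_N * 'I_N -> 'I_q}.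

Definition path_colors N q (c : coloring N q) (s : seq 'I_N) : {set 'I_q} :=
  [set c p | p in zip s (behead s)].

Definition good_path N q r (c : coloring N q) (s : seq 'I_N) : bool :=
  sorted (fun x y : 'I_N => x < y) s && (#|path_colors c s| <= r).

(* A strictly increasing vertex sequence is the increasing enumeration of
   its vertex set; enum S for S : {set 'I_N} is increasing. *)
Definition fK N q r (c : coloring N q) : nat :=
  \max_(S : {set 'I_N} | good_path r c (enum S)) #|S|.

(* f_{q,r}(N): minimum of fK over all q-colorings (bounded by N, the seed). *)
Definition f (q r N : nat) : nat :=
  \big[minn/N]_(c : coloring N q) fK r c.

From HB Require Import structures.
From mathcomp Require Import all_boot.

Set Implicit Arguments.
Unset Strict Implicit.
Unset Printing Implicit Defensive.

(* Take colourings c1 of K_N1 and c2 of K_N2 realising f(N1) and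
   f(N2), view the vertices of K_(N1 N2) as pairs (i, j) ordered
   lexicographically, and colour an edge by c2 on the second coordinates
   inside a block {i} x [N2] and by c1 on the blocks otherwise.  Consecutive
   vertices of a monotone path P that lie in different blocks i < i' are the
   last vertex of P in block i and the first one in block i', so the blocks
   met by P form a monotone path of c1 using only colours of P; likewise P
   restricted to a block is a monotone path of c2.  Hence
   |P| <= f(N1) f(N2). *)

Section ConsecutiveInSorted.
Variables (T : eqType) (lt : rel T).
Hypotheses (lt_irr : irreflexive lt) (lt_trans : transitive lt).

Lemma mem_zip_behead_sorted (s : seq T) x y : sorted lt s ->
  ((x, y) \in zip s (behead s)) =
  [&& x \in s, y \in s, lt x y & ~~ has (fun z => lt x z && lt z y) s].
Proof.
elim: s => [|a [|b t] IHs] //.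
  by move=> _; rewrite !inE; case: eqP => // ->; case: eqP => // ->; rewrite lt_irr.
move=> /[dup] /(order_path_min lt_trans) lt_a_bt /= /andP[lt_ab sorted_bt].
have lt_b_t := order_path_min lt_trans sorted_bt.
rewrite [(x, y) \in _]in_cons; have /= -> := IHs sorted_bt.
have lt_asym u v : lt u v -> lt v u = false.
  by move=> lt_uv; apply: contraTF isT => /(lt_trans lt_uv); rewrite lt_irr.
case: (eqVneq x a) => [->|x_neq_a] /=; last first.
  rewrite xpair_eqE [x \in a :: _]in_cons (negPf x_neq_a) /=.
  case x_in: (x \in b :: t) => //=.
  have lt_xa := lt_asym _ _ (allP lt_a_bt x x_in).
  by rewrite [y \in a :: _]in_cons; case: eqP => [->|_]; rewrite ?lt_xa ?andbF.
have a_notin : a \notin b :: t by apply/negP => /(allP lt_a_bt); rewrite lt_irr.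
rewrite xpair_eqE eqxx (negPf a_notin) lt_irr mem_head /= orbF.
case: (eqVneq y b) => [->|y_neq_b].
  rewrite !inE eqxx orbT lt_ab (lt_irr b) /=; apply/esym/hasPn => z /(allP lt_b_t).
  by move=> /lt_asym ->; rewrite andbF.
apply/esym/and3P => -[]; rewrite !inE (negPf y_neq_b) /= => /orP[/eqP->|y_in_t].
  by rewrite lt_irr.
by rewrite lt_ab (allP lt_b_t y y_in_t).
Qed.

End ConsecutiveInSorted.

Lemma sorted_enum_set N (S : {set 'I_N}) : sorted (fun u v : 'I_N => u < v) (enum S).
Proof.
have sorted_ord : sorted (fun u v : 'I_N => u < v) (enum 'I_N).
  by have := iota_ltn_sorted 0 N; rewrite -val_enum_ord sorted_map.
by rewrite /enum_mem -enumT; apply: sorted_filter => // u v w; apply: ltn_trans.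
Qed.

Definition adjacent N (S : {set 'I_N}) (u v : 'I_N) : bool :=
  [&& u \in S, v \in S, u < v & ~~ [exists z in S, (u < z) && (z < v)]].

Lemma mem_zip_behead_enum N (S : {set 'I_N}) u v :
  ((u, v) \in zip (enum S) (behead (enum S))) = adjacent S u v.
Proof.
have lt_irr : irreflexive (fun u v : 'I_N => u < v) by move=> w; apply: ltnn.
have lt_trans : transitive (fun u v : 'I_N => u < v) by move=> ? ? ?; apply: ltn_trans.
rewrite (mem_zip_behead_sorted lt_irr lt_trans) ?sorted_enum_set //.
rewrite !mem_enum; congr [&& _, _, _ & ~~ _].
by apply/hasP/exists_inP => -[z z_in between]; exists z; rewrite ?mem_enum in z_in *.
Qed.

Lemma good_path_enum_transfer N N' q r (c : coloring N q) (c' : coloring N' q)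
    (S : {set 'I_N}) (S' : {set 'I_N'}) :
  (forall u v, adjacent S u v -> exists2 p, adjacent S' p.1 p.2 & c (u, v) = c' p) ->
  good_path r c' (enum S') -> good_path r c (enum S).
Proof.
move=> adjacent_colors /andP[_ few_colors]; rewrite /good_path sorted_enum_set /=.
apply: leq_trans few_colors; apply/subset_leq_card/subsetP.
move=> _ /imsetP[[u v] adj_uv ->].
rewrite mem_zip_behead_enum in adj_uv.
have [[u' v'] adj_uv' ->] := adjacent_colors u v adj_uv.
by apply: imset_f; rewrite mem_zip_behead_enum.
Qed.

Section Blowup.
Variables N1 N2 : nat.

Lemma block_subproof (v : 'I_(N1 * N2)) : v %/ N2 < N1.
Proof.
case: N2 v => [|n] v; first by case: v => m; rewrite muln0.
by rewrite ltn_divLR.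
Qed.

Lemma offset_subproof (v : 'I_(N1 * N2)) : v %% N2 < N2.
Proof.
case: N2 v => [|n] v; first by case: v => m; rewrite muln0.
by rewrite ltn_pmod.
Qed.

Lemma lex_subproof (i : 'I_N1) (j : 'I_N2) : i * N2 + j < N1 * N2.
Proof.
by rewrite (leq_trans (_ : _ < i.+1 * N2)) ?leq_mul2r ?ltn_ord ?orbT // mulSnr ltn_add2l.
Qed.

Definition block v : 'I_N1 := Ordinal (block_subproof v).
Definition offset v : 'I_N2 := Ordinal (offset_subproof v).
Definition lex i j : 'I_(N1 * N2) := Ordinal (lex_subproof i j).

Lemma block_lex i j : block (lex i j) = i.
Proof.
apply: val_inj => /=; have N2_gt0 : 0 < N2 by apply: leq_ltn_trans (ltn_ord j).
by rewrite divnMDl // divn_small // addn0.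
Qed.

Lemma offset_lex i j : offset (lex i j) = j.
Proof. by apply: val_inj; rewrite /= modnMDl modn_small. Qed.

Lemma lex_block_offset v : lex (block v) (offset v) = v.
Proof. by apply: val_inj; rewrite /= -divn_eq. Qed.

Lemma leq_block (u v : 'I_(N1 * N2)) : u <= v -> block u <= block v.
Proof. exact: leq_div2r. Qed.

Lemma ltn_block (u v : 'I_(N1 * N2)) : block u < block v -> u < v.
Proof. by apply: contraTT; rewrite -!leqNgt; apply: leq_block. Qed.

Lemma ltn_offset (u v : 'I_(N1 * N2)) :
  block u = block v -> (u < v) = (offset u < offset v).
Proof.
move=> /(congr1 val) /= block_uv.
by rewrite {1}(divn_eq u N2) {1}(divn_eq v N2) block_uv ltn_add2l.
Qed.

Lemma adjacent_block_image (S : {set 'I_(N1 * N2)}) i i' :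
  adjacent (block @: S) i i' ->
  exists u v, [/\ adjacent S u v, block u = i & block v = i'].
Proof.
case/and4P=> /imsetP[u0 u0S ->] /imsetP[v0 v0S ->] lt_blocks.
move=> /exists_inPn no_block_between.
pose in_block k : pred 'I_(N1 * N2) := fun u => (u \in S) && (block u == k).
have u0_in : in_block (block u0) u0 by rewrite /in_block u0S eqxx.
have v0_in : in_block (block v0) v0 by rewrite /in_block v0S eqxx.
case: (arg_maxnP val u0_in) => u /andP[uS /eqP bu] u_max.
case: (arg_minnP val v0_in) => v /andP[vS /eqP bv] v_min.
exists u, v; split=> //; apply/and4P; split=> //.
  by apply: ltn_block; rewrite bu bv.
apply/exists_inPn => z zS; apply/negP => /andP[lt_uz lt_zv].
have lt_u0z : block u0 < block z.
  move: (leq_block (ltnW lt_uz)); rewrite bu leq_eqVlt => /orP[/eqP/val_inj bz|//].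
  by have := u_max z; rewrite /in_block zS -bz eqxx /= leqNgt lt_uz => /(_ isT).
have lt_zv0 : block z < block v0.
  move: (leq_block (ltnW lt_zv)); rewrite bv leq_eqVlt => /orP[/eqP/val_inj bz|//].
  by have := v_min z; rewrite /in_block zS bz eqxx /= leqNgt lt_zv => /(_ isT).
by have := no_block_between _ (imset_f block zS); rewrite lt_u0z lt_zv0.
Qed.

Lemma adjacent_fiber (S : {set 'I_(N1 * N2)}) i j j' :
  adjacent [set j | lex i j \in S] j j' -> adjacent S (lex i j) (lex i j').
Proof.
case/and4P; rewrite !inE => jS j'S lt_jj' /exists_inPn no_between.
apply/and4P; split=> //; first by rewrite ltn_offset ?block_lex // !offset_lex.
apply/exists_inPn => z zS; apply/negP => /andP[lt_jz lt_zj'].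
have bz : block z = i.
  apply/val_inj/eqP; rewrite eqn_leq -{2}(block_lex i j) -{1}(block_lex i j').
  by rewrite (leq_block (ltnW lt_zj')) (leq_block (ltnW lt_jz)).
have := no_between (offset z); rewrite inE -bz lex_block_offset zS => /(_ isT).
rewrite -{1}(offset_lex i j) -(offset_lex i j') -!ltn_offset ?block_lex //.
by rewrite lt_jz lt_zj'.
Qed.

Lemma card_blocks (S : {set 'I_(N1 * N2)}) :
  #|S| = \sum_(i in block @: S) #|[set j | lex i j \in S]|.
Proof.
rewrite -sum1_card (partition_big block (mem (block @: S))) /=; last first.
  by move=> v vS; apply: imset_f.
apply: eq_bigr => i _; rewrite sum1dep_card -(card_imset _ (can_inj (offset_lex i))).
apply: eq_card => v; rewrite inE.
apply/andP/imsetP => [[vS /eqP <-]|[j]].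
  by exists (offset v); rewrite ?inE lex_block_offset.
by rewrite inE => jS ->; rewrite block_lex.
Qed.

Variables (q : nat) (c1 : coloring N1 q) (c2 : coloring N2 q).

Definition blowup : coloring (N1 * N2) q :=
  [ffun p => if block p.1 == block p.2 then c2 (offset p.1, offset p.2)
             else c1 (block p.1, block p.2)].

Lemma fK_blowup r : fK r blowup <= fK r c1 * fK r c2.
Proof.
apply/bigmax_leqP => S good_S; rewrite card_blocks.
have good_blocks : good_path r c1 (enum (block @: S)).
  apply: good_path_enum_transfer good_S => i i' adj_ii'.
  have [u [v [adj_uv bu bv]]] := adjacent_block_image adj_ii'.
  exists (u, v) => //; rewrite ffunE /= bu bv ifN //.
  by case/and4P: adj_ii' => _ _ lt_ii' _; apply: contraTneq lt_ii' => ->; rewrite ltnn.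
have good_fiber i : good_path r c2 (enum [set j | lex i j \in S]).
  apply: good_path_enum_transfer good_S => j j' adj_jj'.
  exists (lex i j, lex i j'); first exact: adjacent_fiber.
  by rewrite ffunE /= !block_lex !offset_lex eqxx.
apply: (@leq_trans (\sum_(i in block @: S) fK r c2)).
  by apply: leq_sum => i _; apply: leq_bigmax_cond.
by rewrite sum_nat_const leq_mul // leq_bigmax_cond.
Qed.

End Blowup.

HB.instance Definition _ := SemiGroup.isComLaw.Build nat minn minnA minnC.

Lemma f_le_fK q r N (c : coloring N q) : f q r N <= fK r c.
Proof. by rewrite /f (bigD1 c) ?geq_minl. Qed.

Lemma fK_le N q r (c : coloring N q) : fK r c <= N.
Proof. by apply/bigmax_leqP => S _; rewrite (leq_trans (max_card _)) ?card_ord. Qed.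

Lemma exists_fK_le_f q r N : 0 < q -> exists c : coloring N q, fK r c <= f q r N.
Proof.
move=> q_gt0; apply: (big_ind (fun m => exists c : coloring N q, fK r c <= m)).
- by exists [ffun => Ordinal q_gt0]; apply: fK_le.
- by move=> x y [cx ?] [cy ?]; case: (leqP x y); [exists cx | exists cy].
- by move=> c _; exists c.
Qed.

Theorem corollary3p4 (N1 N2 q r : nat) :
  0 < N1 -> 0 < N2 -> 0 < q -> 0 < r -> r < q ->
  f q r (N1 * N2) <= f q r N1 * f q r N2.
Proof.
move=> _ _ q_gt0 _ _.
have [c1 fK_c1] := exists_fK_le_f r N1 q_gt0.
have [c2 fK_c2] := exists_fK_le_f r N2 q_gt0.
apply: leq_trans (f_le_fK r (blowup c1 c2)) _.
by apply: leq_trans (fK_blowup c1 c2 r) _; apply: leq_mul.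
Qed.
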